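(* Let $\Phi_M,\Phi_N:\mathcal{L}(\mathcal{H}_A)\to\mathcal{L}(\mathcal{H}_B)$ be two measurement channels corresponding to the $n$-outcome POVMs $M=\{M_i\}_{i=0}^{n-1}$ and $N=\{N_i\}_{i=0}^{n-1}$. The channels $\Phi_M,\Phi_N$ form a Maximal Entanglement Worst Case pair if and only if there exist a pure state $|\phi\rangle\langle\phi|\in\mathcal{L}(\mathcal{H}_A)$ and coefficients $\gamma_i\in\mathbb{C}$ such that $M_i-N_i=\gamma_i|\phi\rangle\langle\phi|$ for all $i\in\{0,\ldots,n-1\}$. Moreover, the optimal input state is then necessarily $\rho_{AA'}=|\phi\rangle\langle\phi|\otimes\tau$, where $\tau\in\mathcal{D}(\mathcal{H}_{A'})$ is an arbitrary state.
   Context: The measurement channel of a POVM $M$ is $\Phi_M(\rho)=\sum_{i=0}^{n-1}\operatorname{Tr}(\rho M_i)\,|i\rangle\langle i|$. For channel discrimination with uniform priors using an input $\rho_{AA'}$, with $d=\dim\mathcal{H}_A$, $\Delta_\Phi=\Phi_M-\Phi_N$, diamond norm $\|\mathcal{S}\|_\diamond=\max_{\rho_{AA'}}\|(\mathcal{S}\otimes I_{A'})\rho_{AA'}\|_1$ and ME-norm $\|\mathcal{S}\|_{\mathrm{ME}}=\|J(\mathcal{S})/d\|_1$ with Choi operator $J(\mathcal{S})=\sum_{ij}\mathcal{S}(|i\rangle\langle j|)\otimes|i\rangle\langle j|$, a pair is Maximal Entanglement Worst Case (MEWC) if $\|\Delta_\Phi\|_\diamond=d\|\Delta_\Phi\|_{\mathrm{ME}}$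 (the maximal possible gap; a maximally entangled input is maximally suboptimal). *)

From HB Require Import structures.
From mathcomp Require Import all_boot all_order all_algebra.
From mathcomp Require Import complex mxtens.
From mathcomp Require Import boolp classical_sets reals.

Set Implicit Arguments.
Unset Strict Implicit.
Unset Printing Implicit Defensive.

Import Order.TTheory GRing.Theory Num.Theory.
Local Open Scope ring_scope.
Local Open Scope classical_set_scope.

Section QDefs.
Variable R : realType.
Local Notation C := (R[i]).

Definition adjmx m n (A : 'M[C]_(m, n)) : 'M[C]_(n, m) :=
  \matrix_(i, j) (A j i)^*.

Definition psdmx m (A : 'M[C]_m) : Prop :=
  A = adjmx A /\ forall v : 'cV[C]_m, 0 <= (adjmx v *m A *m v) 0 0.

Definition densitymx m (A : 'M[C]_m) : Prop := psdmx A /\ \tr A = 1.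

Definition povm d n (M : 'I_n -> 'M[C]_d) : Prop :=
  (forall i, psdmx (M i)) /\ \sum_(i < n) M i = 1%:M.

Definition meas_channel d n (M : 'I_n -> 'M[C]_d) (rho : 'M[C]_d) : 'M[C]_n :=
  diag_mx (\row_(i < n) \tr (rho *m M i)).

(* (S (x) id_{A'}) rho for rho on H_A (x) H_A', dim H_A' = k, using
   rho = sum_{a,b} rho_{ab} (x) |a><b| *)
Definition tensI d m k (S : 'M[C]_d -> 'M[C]_m) (rho : 'M[C]_(d * k))
  : 'M[C]_(m * k) :=
  \sum_(a < k) \sum_(b < k)
     S (\matrix_(x, y) rho (mxtens_index (x, a)) (mxtens_index (y, b)))
       *t (delta_mx a b : 'M[C]_k).

(* trace norm ||X||_1 = Tr sqrt(X^* X), sqrt = the PSD square root *)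
Definition trnorm m n (X : 'M[C]_(m, n)) : R :=
  sup [set r : R | exists P : 'M[C]_n,
         psdmx P /\ P *m P = adjmx X *m X /\ \tr P = Complex r 0].

(* diamond norm, ancilla A' of the same dimension d as A *)
Definition diamond_norm d m (S : 'M[C]_d -> 'M[C]_m) : R :=
  sup [set r : R | exists rho : 'M[C]_(d * d),
         densitymx rho /\ r = trnorm (tensI S rho)].

Definition choi d m (S : 'M[C]_d -> 'M[C]_m) : 'M[C]_(m * d) :=
  \sum_(i < d) \sum_(j < d) S (delta_mx i j) *t (delta_mx i j : 'M[C]_d).

Definition me_norm d m (S : 'M[C]_d -> 'M[C]_m) : R :=
  trnorm ((d%:R)^-1 *: choi S).

Definition delta_channel d n (M N : 'I_n -> 'M[C]_d) (rho : 'M[C]_d)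
  : 'M[C]_n := meas_channel M rho - meas_channel N rho.

Definition MEWC d n (M N : 'I_n -> 'M[C]_d) : Prop :=
  diamond_norm (delta_channel M N) = d%:R * me_norm (delta_channel M N).

End QDefs.

(* Write D_i = M_i - N_i.  The output of (Delta (x) id) on rho is block diagonal,
   the i-th block being B_i = [tr (rho_ab D_i)]_ab, so its trace norm is
   sum_i ||B_i||_1.  Diagonalizing B_i and measuring the ancilla in its
   eigenbasis gives ||B_i||_1 <= tr (rho_A |D_i|), where rho_A is the reduced
   state on A; hence the diamond norm is at most the top eigenvalue of
   K = sum_i |D_i|, whereas d ||Delta||_ME = sum_i ||D_i||_1 = tr K.  So MEWC
   forces K to have a single nonzero eigenvalue, with eigenvector phi; since
   K v = 0 implies |D_i| v = 0 and hence D_i v = 0, every D_i is then a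
   multiple of phi phi^*.  Conversely, if D_i = gamma_i phi phi^*, then
   ||(Delta (x) id) rho||_1 = (sum_i |gamma_i|) tr ((<phi| (x) 1) rho (|phi> (x) 1)),
   which is at most sum_i |gamma_i| = d ||Delta||_ME, with equality exactly when
   rho is supported on phi (x) H_A', i.e. rho = phi phi^* (x) tau. *)

From HB Require Import structures.
From mathcomp Require Import all_boot all_order all_algebra.
From mathcomp Require Import complex mxtens.
From mathcomp Require Import boolp classical_sets reals.
From mathcomp Require Import spectral.
Import Order.TTheory GRing.Theory Num.Theory.
Local Open Scope ring_scope.

Set Implicit Arguments.
Unset Strict Implicit.
Unset Printing Implicit Defensive.

Lemma ge0_complexRe (R : realType) (z : R[i]) :
  0 <= z -> Complex (complex.Re z) 0 = z.
Proof. by case: z => a b; rewrite lecE /= => /andP[/eqP <- _]. Qed.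

Lemma sum_pair_delta (K : pzSemiRingType) (I J : finType) (F : I -> J -> K) a b :
  \sum_i \sum_j F i j * ((a == i) && (b == j))%:R = F a b.
Proof.
rewrite (bigD1 a) //= [X in _ + X]big1 => [|i ia]; last first.
  by apply: big1=> j _; rewrite eq_sym (negPf ia) mulr0.
rewrite addr0 (bigD1 b) //= big1 => [|j jb].
  by rewrite !eqxx mulr1 addr0.
by rewrite eq_sym (negPf jb) andbF mulr0.
Qed.

Lemma sum_mxtens_index (V : nmodType) n d (F : 'I_(n * d) -> V) :
  \sum_p F p = \sum_i \sum_a F (mxtens_index (i, a)).
Proof.
rewrite pair_big /= (reindex (@mxtens_index n d)) /=; first by apply: eq_bigr=> -[].
by exists (@mxtens_unindex n d)=> p _; rewrite (mxtens_indexK, mxtens_unindexK).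
Qed.

Lemma matrix_cols_eq0 (K : pzRingType) m p (A : 'M[K]_(m, p)) :
  (forall j, A *m (delta_mx j 0 : 'cV_p) = 0) -> A = 0.
Proof.
move=> A0; apply/matrixP=> i j; have := congr1 (fun B : 'cV_m => B i 0) (A0 j).
by rewrite -colE !mxE.
Qed.

Lemma mxtrace_delta_mul (K : pzRingType) n (i j : 'I_n) (A : 'M[K]_n) :
  \tr (delta_mx i j *m A) = A j i.
Proof.
rewrite /mxtrace (bigD1 i) //= big1 => [|x xi]; last first.
  by rewrite mxE big1 // => y _; rewrite mxE (negPf xi) mul0r.
rewrite addr0 mxE (bigD1 j) //= big1 => [|y yj]; last by rewrite mxE (negPf yj) andbF mul0r.
by rewrite addr0 mxE !eqxx mul1r.
Qed.

(** * Conjugate transpose and positive semidefinite matrices *)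

Section Adjoint.
Variable R : realType.
Local Notation C := R[i].

Lemma adjmxK m n (A : 'M[C]_(m, n)) : adjmx (adjmx A) = A.
Proof. by apply/matrixP=> i j; rewrite !mxE conjCK. Qed.

Lemma adjmxM m n p (A : 'M[C]_(m, n)) (B : 'M[C]_(n, p)) :
  adjmx (A *m B) = adjmx B *m adjmx A.
Proof.
apply/matrixP=> i j; rewrite !mxE rmorph_sum; apply: eq_bigr=> k _.
by rewrite !mxE rmorphM mulrC.
Qed.

Lemma adjmxD m n (A B : 'M[C]_(m, n)) : adjmx (A + B) = adjmx A + adjmx B.
Proof. by apply/matrixP=> i j; rewrite !mxE rmorphD. Qed.

Lemma adjmxB m n (A B : 'M[C]_(m, n)) : adjmx (A - B) = adjmx A - adjmx B.
Proof. by apply/matrixP=> i j; rewrite !mxE rmorphB. Qed.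

Lemma adjmxZ m n (a : C) (A : 'M[C]_(m, n)) : adjmx (a *: A) = a^* *: adjmx A.
Proof. by apply/matrixP=> i j; rewrite !mxE rmorphM. Qed.

Lemma adjmx1 n : adjmx (1%:M : 'M[C]_n) = 1%:M.
Proof. by apply/matrixP=> i j; rewrite !mxE eq_sym; case: eqP; rewrite ?conjC0 ?conjC1. Qed.

Lemma adjmx_delta m n (i : 'I_m) (j : 'I_n) :
  adjmx (delta_mx i j : 'M[C]_(m, n)) = delta_mx j i.
Proof. by apply/matrixP=> a b; rewrite !mxE andbC; case: andP; rewrite ?rmorph0 ?rmorph1. Qed.

Lemma adjmx_trmx m n (A : 'M[C]_(m, n)) : adjmx A^T = (adjmx A)^T.
Proof. by apply/matrixP=> i j; rewrite !mxE. Qed.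

Lemma adjmx_conj_trmx m n (A : 'M[C]_(m, n)) : adjmx A = map_mx Num.conj A^T.
Proof. by apply/matrixP=> i j; rewrite !mxE. Qed.

Lemma mxtrace_adjmx n (A : 'M[C]_n) : \tr (adjmx A) = (\tr A)^*.
Proof. by rewrite /mxtrace rmorph_sum; apply: eq_bigr=> i _; rewrite mxE. Qed.

Lemma mulmx_adjmxE m p (A B : 'M[C]_(m, p)) (X : 'M[C]_p) u v :
  (A *m X *m adjmx B) u v = \sum_q \sum_q' A u q * X q q' * (B v q')^*.
Proof.
rewrite mxE exchange_big; apply: eq_bigr=> q' _; rewrite mxE mulr_suml.
by apply: eq_bigr=> q _; rewrite !mxE.
Qed.

End Adjoint.

Section PositiveSemidefinite.
Variable R : realType.
Local Notation C := R[i].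

Definition qform n (A : 'M[C]_n) (v : 'cV[C]_n) : C := (adjmx v *m A *m v) 0 0.

Lemma qformE n (A : 'M[C]_n) v :
  qform A v = \sum_i \sum_j (v i 0)^* * A i j * v j 0.
Proof.
rewrite exchange_big /qform mxE; apply: eq_bigr=> j _; rewrite mxE mulr_suml.
by apply: eq_bigr=> i _; rewrite !mxE.
Qed.

Lemma qform_conj m p (A : 'M[C]_(m, p)) (X : 'M[C]_p) v :
  qform (A *m X *m adjmx A) v = qform X (adjmx A *m v).
Proof. by rewrite /qform adjmxM adjmxK !mulmxA. Qed.

Lemma qform_adjmx n (A : 'M[C]_n) v : qform (adjmx A) v = (qform A v)^*.
Proof.
have -> : (qform A v)^* = adjmx (adjmx v *m A *m v) 0 0 by rewrite mxE.
by rewrite !adjmxM adjmxK mulmxA.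
Qed.

Lemma qform_delta n (A : 'M[C]_n) k : qform A (delta_mx k 0) = A k k.
Proof. by rewrite /qform adjmx_delta -rowE -colE !mxE. Qed.

Lemma qform_sum (I : finType) n (F : I -> 'M[C]_n) v :
  qform (\sum_i F i) v = \sum_i qform (F i) v.
Proof. by rewrite /qform mulmx_sumr mulmx_suml summxE. Qed.

Lemma qform_diag n (h : 'rV[C]_n) v :
  qform (diag_mx h) v = \sum_k h 0 k * `|v k 0| ^+ 2.
Proof.
rewrite /qform -mulmxA mul_diag_mx mxE; apply: eq_bigr=> k _.
by rewrite !mxE normCK mulrC mulrA.
Qed.

Lemma mxtrace_mul_outer n (X : 'M[C]_n) v : \tr (X *m (v *m adjmx v)) = qform X v.
Proof. by rewrite mulmxA mxtrace_mulC mulmxA /mxtrace big_ord1. Qed.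

Lemma psdmx_herm n (A : 'M[C]_n) : psdmx A -> adjmx A = A.
Proof. by move=> [hA _]; rewrite -hA. Qed.

Lemma psdmx_qform n (A : 'M[C]_n) v : psdmx A -> 0 <= qform A v.
Proof. by move=> [_]; apply. Qed.

Lemma psdmxP n (A : 'M[C]_n) :
  adjmx A = A -> (forall v, 0 <= qform A v) -> psdmx A.
Proof. by move=> hA qA; split; first rewrite hA. Qed.

Lemma psdmx_conj m n (A : 'M[C]_(m, n)) (X : 'M[C]_n) :
  psdmx X -> psdmx (A *m X *m adjmx A).
Proof.
move=> pX; apply: psdmxP=> [|v]; last by rewrite qform_conj psdmx_qform.
by rewrite !adjmxM adjmxK (psdmx_herm pX) mulmxA.
Qed.

Lemma psdmx_diag_ge0 n (A : 'M[C]_n) k : psdmx A -> 0 <= A k k.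
Proof. by move=> pA; rewrite -qform_delta psdmx_qform. Qed.

Lemma psdmx_tr_ge0 n (A : 'M[C]_n) : psdmx A -> 0 <= \tr A.
Proof. by move=> pA; apply: sumr_ge0=> k _; apply: psdmx_diag_ge0. Qed.

Lemma psdmx0 n : psdmx (0 : 'M[C]_n).
Proof.
apply: psdmxP=> [|v]; first by apply/matrixP=> i j; rewrite !mxE rmorph0.
by rewrite /qform mulmx0 mul0mx mxE.
Qed.

Lemma psdmxD n (A B : 'M[C]_n) : psdmx A -> psdmx B -> psdmx (A + B).
Proof.
move=> pA pB; apply: psdmxP=> [|v]; first by rewrite adjmxD !psdmx_herm.
by rewrite /qform mulmxDr mulmxDl mxE addr_ge0 // psdmx_qform.
Qed.

Lemma psdmx_sum (I : finType) n (F : I -> 'M[C]_n) :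
  (forall i, psdmx (F i)) -> psdmx (\sum_i F i).
Proof. by move=> pF; elim/big_ind: _ => //; [exact: psdmx0 | exact: psdmxD]. Qed.

Lemma psdmxZ n (a : C) (A : 'M[C]_n) : 0 <= a -> psdmx A -> psdmx (a *: A).
Proof.
move=> a0 pA; apply: psdmxP=> [|v].
  by rewrite adjmxZ psdmx_herm // conj_Creal // ger0_real.
by rewrite /qform -scalemxAr -scalemxAl mxE mulr_ge0 // psdmx_qform.
Qed.

Lemma psdmx_outer n (w : 'cV[C]_n) : psdmx (w *m adjmx w).
Proof.
apply: psdmxP=> [|v]; first by rewrite adjmxM adjmxK.
have -> : qform (w *m adjmx w) v = `|(adjmx v *m w) 0 0| ^+ 2.
  have e : (adjmx w *m v) 0 0 = ((adjmx v *m w) 0 0)^*.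
    by rewrite -(adjmxK (adjmx w *m v)) adjmxM adjmxK mxE.
  by rewrite normCK /qform !mulmxA -mulmxA [in LHS]mxE big_ord1 e.
exact: exprn_ge0.
Qed.

Lemma densitymx_delta m (k : 'I_m) : densitymx (delta_mx k k : 'M[C]_m).
Proof.
have -> : delta_mx k k = delta_mx k 0 *m adjmx (delta_mx k 0 : 'cV[C]_m).
  by rewrite adjmx_delta mul_delta_mx.
 split; first exact: psdmx_outer.
by rewrite mxtrace_mulC adjmx_delta mul_delta_mx trace_mx11 mxE !eqxx.
Qed.

Lemma psdmx1 n : psdmx (1%:M : 'M[C]_n).
Proof.
apply: psdmxP=> [|v]; first exact: adjmx1.
rewrite /qform mulmx1 mxE; apply: sumr_ge0=> k _.
by rewrite mxE mulrC -normCK exprn_ge0.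
Qed.

Lemma psdmx_trmx n (A : 'M[C]_n) : psdmx A -> psdmx A^T.
Proof.
move=> pA; apply: psdmxP=> [|v]; first by rewrite adjmx_trmx psdmx_herm.
have := psdmx_qform (map_mx Num.conj v) pA; rewrite !qformE exchange_big.
congr (0 <= _); apply: eq_bigr=> i _; apply: eq_bigr=> j _.
by rewrite !mxE conjCK mulrC [_ * A j i]mulrC mulrA.
Qed.

End PositiveSemidefinite.

(** * Spectral decomposition of Hermitian matrices *)

Section Spectral.
Variable R : realType.
Local Notation C := R[i].
Variable n : nat.

Definition spectral_vec (A : 'M[C]_n) k : 'cV[C]_n :=
  adjmx (spectralmx A) *m delta_mx k 0.

Lemma spectral_mulmxV (A : 'M[C]_n) : spectralmx A *m adjmx (spectralmx A) = 1%:M.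
Proof. by rewrite adjmx_conj_trmx; apply/unitarymxP; apply: spectral_unitarymx. Qed.

Lemma spectral_mulVmx (A : 'M[C]_n) : adjmx (spectralmx A) *m spectralmx A = 1%:M.
Proof.
rewrite adjmx_conj_trmx -invmx_unitary ?spectral_unitarymx //.
by rewrite mulVmx // spectral_unit.
Qed.

Lemma spectral_vec_dot (A : 'M[C]_n) k :
  adjmx (spectral_vec A k) *m spectral_vec A k = 1%:M.
Proof.
rewrite adjmxM adjmxK adjmx_delta -mulmxA (mulmxA (spectralmx A)) spectral_mulmxV.
by rewrite mul1mx mul_delta_mx; apply/matrixP=> i j; rewrite !ord1 !mxE.
Qed.

Lemma udiag_sum (U : 'M[C]_n) (h : 'rV[C]_n) :
  adjmx U *m diag_mx h *m U =
  \sum_k h 0 k *: (adjmx U *m delta_mx k 0 *m adjmx (adjmx U *m delta_mx k 0 : 'cV_n)).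
Proof.
rewrite diag_mx_sum_delta mulmx_sumr mulmx_suml; apply: eq_bigr=> k _.
rewrite -scalemxAr -scalemxAl; congr (_ *: _).
by rewrite adjmxM adjmxK adjmx_delta !mulmxA -(mulmxA _ (delta_mx k 0)) mul_delta_mx.
Qed.

Lemma sum_spectral_vec (A : 'M[C]_n) :
  \sum_k spectral_vec A k *m adjmx (spectral_vec A k) = 1%:M.
Proof.
have -> : 1%:M = adjmx (spectralmx A) *m diag_mx (const_mx 1) *m spectralmx A.
  by rewrite diag_const_mx mulmx1 spectral_mulVmx.
rewrite udiag_sum.
by apply: eq_bigr=> k _; rewrite mxE scale1r.
Qed.

Variables (H : 'M[C]_n) (hH : adjmx H = H).
Local Notation U := (spectralmx H).
Local Notation D := (spectral_diag H).

Lemma hermmx_spectral : H = adjmx U *m diag_mx D *m U.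
Proof.
have nH : H \is normalmx by apply/normalmxP; rewrite -!adjmx_conj_trmx hH.
rewrite adjmx_conj_trmx -invmx_unitary ?spectral_unitarymx //.
exact/orthomx_spectralP.
Qed.

Lemma hermmx_spectral_sum :
  H = \sum_k D 0 k *: (spectral_vec H k *m adjmx (spectral_vec H k)).
Proof. by rewrite {1}hermmx_spectral udiag_sum. Qed.

Lemma spectral_vec_eigen k : H *m spectral_vec H k = D 0 k *: spectral_vec H k.
Proof.
rewrite /spectral_vec {1}hermmx_spectral -!mulmxA (mulmxA U) spectral_mulmxV mul1mx.
rewrite scalemxAr; congr (_ *m _); apply/matrixP=> i j.
by rewrite mul_diag_mx !mxE; case: (i =P k)=> [->|_]; rewrite ?mulr0.
Qed.

Lemma qform_spectral_vec k : qform H (spectral_vec H k) = D 0 k.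
Proof.
by rewrite /qform -mulmxA spectral_vec_eigen -scalemxAr spectral_vec_dot !mxE mulr1.
Qed.

Lemma hermmx_spectral_real k : (D 0 k)^* = D 0 k.
Proof. by rewrite -qform_spectral_vec -qform_adjmx hH. Qed.

Lemma mxtrace_hermmx : \tr H = \sum_k D 0 k.
Proof.
rewrite {1}hermmx_spectral_sum raddf_sum /=; apply: eq_bigr=> k _.
by rewrite mxtraceZ mxtrace_mulC spectral_vec_dot mxtrace1 mulr1.
Qed.

End Spectral.

Section SpectralPsd.
Variable R : realType.
Local Notation C := R[i].
Variable n : nat.

Lemma psdmx_spectral_ge0 (P : 'M[C]_n) k : psdmx P -> 0 <= spectral_diag P 0 k.
Proof. by move=> pP; rewrite -(qform_spectral_vec (psdmx_herm pP)) psdmx_qform. Qed.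

Lemma psdmx_qform_eq0 (P : 'M[C]_n) v : psdmx P -> qform P v = 0 -> P *m v = 0.
Proof.
move=> pP; have eP := hermmx_spectral (psdmx_herm pP).
have D0 k := psdmx_spectral_ge0 k pP.
move: eP D0; set U := spectralmx P; set D := spectral_diag P => eP D0.
rewrite {1}eP -{2}[U]adjmxK qform_conj adjmxK qform_diag => /psumr_eq0P DUv0.
have {}DUv0 k : D 0 k * (U *m v) k 0 = 0.
  have := DUv0 (fun i _ => mulr_ge0 (D0 i) (exprn_ge0 2 (normr_ge0 _))) k isT.
  rewrite normCK => /eqP; rewrite !mulf_eq0 => /orP[/eqP->|/orP[]/eqP Uv0].
  - by rewrite mul0r.
  - by rewrite Uv0 mulr0.
  - by move: Uv0 => /eqP; rewrite conjC_eq0 => /eqP->; rewrite mulr0.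
rewrite eP -!mulmxA mul_diag_mx.
have -> : \matrix_(i, j) (D 0 i * (U *m v) i j) = 0.
  by apply/matrixP=> i j; rewrite [LHS]mxE [RHS]mxE (ord1 j) DUv0.
by rewrite mulmx0.
Qed.

Lemma self_dot_eq0 (w : 'cV[C]_n) : (adjmx w *m w) 0 0 = 0 -> w = 0.
Proof.
move=> w0; rewrite -(mul1mx w); apply: psdmx_qform_eq0; first exact: psdmx1.
by rewrite /qform mulmx1.
Qed.

Lemma psdmx_sqrt_uniq (P Q : 'M[C]_n) :
  psdmx P -> psdmx Q -> P *m P = Q *m Q -> P = Q.
Proof.
move=> pP pQ ePQ; apply/subr0_eq.
have hH : adjmx (P - Q) = P - Q by rewrite adjmxB !psdmx_herm.
rewrite (hermmx_spectral_sum hH) big1 // => k _.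
set H := P - Q in hH *; set v := spectral_vec H k; set a := spectral_diag H 0 k.
suff -> : a = 0 by rewrite scale0r.
have Hv : H *m v = a *: v := spectral_vec_eigen hH k.
have vH : adjmx v *m H = a *: adjmx v.
  by rewrite -{1}hH -adjmxM Hv adjmxZ hermmx_spectral_real.
(* [v] is an eigenvector of [P - Q], so [0 = v^* (P^2 - Q^2) v = a (v^* P v + v^* Q v)]. *)
have key : a * (qform P v + qform Q v) = 0.
  have : qform (P *m P - Q *m Q) v = 0 by rewrite ePQ subrr /qform mulmx0 mul0mx mxE.
  have -> : P *m P - Q *m Q = P *m H + H *m Q.
    by rewrite /H mulmxBr mulmxBl addrA subrK.
  rewrite /qform mulmxDr mulmxDl mxE -!mulmxA Hv (mulmxA (adjmx v) H) vH.
  by rewrite -!scalemxAr -scalemxAl !mxE mulrDr.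
apply/eqP; move: key => /eqP; rewrite mulf_eq0 => /orP[//|].
rewrite paddr_eq0 ?psdmx_qform // => /andP[/eqP qP /eqP qQ].
have : H *m v = 0.
  by rewrite /H mulmxBl (psdmx_qform_eq0 pP qP) (psdmx_qform_eq0 pQ qQ) subrr.
rewrite Hv => /eqP; rewrite scalemx_eq0 => /orP[//|/eqP v0].
have := spectral_vec_dot H k; rewrite -/v v0 mulmx0 => /matrixP/(_ 0 0).
by rewrite !mxE => /eqP; rewrite eq_sym oner_eq0.
Qed.

Lemma mulmx_spectral_vec m (A : 'M[C]_(m, n)) (B : 'M[C]_n) k :
  (forall j, j != k -> A *m spectral_vec B j = 0) ->
  A = A *m (spectral_vec B k *m adjmx (spectral_vec B k)).
Proof.
move=> A0; rewrite -{1}[A]mulmx1 -(sum_spectral_vec B) mulmx_sumr (bigD1 k) //=.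
by rewrite big1 ?addr0 // => j jk; rewrite mulmxA A0 // mul0mx.
Qed.

Lemma hermmx_rank1 (D : 'M[C]_n) (u : 'cV[C]_n) : adjmx D = D ->
  D = D *m (u *m adjmx u) -> D = qform D u *: (u *m adjmx u).
Proof.
move=> hD Duu.
have uuD : D = u *m adjmx u *m D by rewrite -{1}hD {1}Duu !adjmxM adjmxK hD.
have eD : D = u *m (adjmx u *m D *m u) *m adjmx u by rewrite !mulmxA -uuD -mulmxA -Duu.
by rewrite {1}eD [adjmx u *m D *m u]mx11_scalar mul_mx_scalar -scalemxAl.
Qed.

End SpectralPsd.

(** * Trace norm and absolute value *)

Section TraceNorm.
Variable R : realType.
Local Notation C := R[i].

Lemma trnormE m n (X : 'M[C]_(m, n)) (P : 'M[C]_n) :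
  psdmx P -> P *m P = adjmx X *m X -> \tr P = Complex (trnorm X) 0.
Proof.
move=> pP eP; have := psdmx_tr_ge0 pP.
case E: (\tr P) => [a b]; rewrite lecE /= => /andP[/eqP b0 _].
rewrite b0 in E *; rewrite /trnorm.
suff -> : [set r : R | exists P0 : 'M[C]_n, psdmx P0 /\ P0 *m P0 = adjmx X *m X /\
            \tr P0 = Complex r 0]%classic = [set a]%classic by rewrite sup1.
apply/seteqP; split=> r /=; last by move=> ->; exists P.
move=> [P0 [pP0 [eP0 tP0]]].
have eq0 : P0 = P by apply: psdmx_sqrt_uniq=> //; rewrite eP0 eP.
by move: tP0; rewrite eq0 E => -[].
Qed.

Definition absmx n (H : 'M[C]_n) : 'M[C]_n :=
  adjmx (spectralmx H) *m diag_mx (map_mx (fun z => `|z|) (spectral_diag H))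
    *m spectralmx H.

Variables (n : nat) (H : 'M[C]_n).

Lemma absmx_sum :
  absmx H = \sum_k `|spectral_diag H 0 k| *: (spectral_vec H k *m adjmx (spectral_vec H k)).
Proof. by rewrite /absmx udiag_sum; apply: eq_bigr=> k _; rewrite mxE. Qed.

Lemma absmx_psd : psdmx (absmx H).
Proof.
by rewrite absmx_sum; apply: psdmx_sum=> k; apply: psdmxZ (psdmx_outer _).
Qed.

Lemma mxtrace_absmx : \tr (absmx H) = \sum_k `|spectral_diag H 0 k|.
Proof.
rewrite absmx_sum raddf_sum /=; apply: eq_bigr=> k _.
by rewrite mxtraceZ mxtrace_mulC spectral_vec_dot mxtrace1 mulr1.
Qed.

Hypothesis hH : adjmx H = H.

Lemma absmx_sq : absmx H *m absmx H = adjmx H *m H.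
Proof.
have eH := hermmx_spectral hH; have Dr := hermmx_spectral_real hH.
have UV := spectral_mulmxV H; rewrite /absmx.
move: eH Dr UV; set U := spectralmx H; set D := spectral_diag H => eH Dr UV.
rewrite hH eH !mulmxA -(mulmxA _ U) UV mulmx1 -(mulmxA _ U (adjmx U)) UV mulmx1.
rewrite -!(mulmxA (adjmx U)) !mulmx_diag; congr (_ *m (diag_mx _ *m _)).
apply/rowP=> k; rewrite !mxE -expr2 -[RHS]expr2 real_normK //.
by rewrite CrealE Dr.
Qed.

Lemma norm_mxtrace_mul_le (X : 'M[C]_n) :
  psdmx X -> `|\tr (X *m H)| <= \tr (X *m absmx H).
Proof.
move=> pX; rewrite {1}(hermmx_spectral_sum hH) absmx_sum !mulmx_sumr !raddf_sum /=.
apply: le_trans (ler_norm_sum _ _ _) _; apply: ler_sum=> k _.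
by rewrite -!scalemxAr !mxtraceZ !mxtrace_mul_outer normrM (ger0_norm (psdmx_qform _ pX)).
Qed.

Lemma absmx_mul_eq0 (v : 'cV[C]_n) : absmx H *m v = 0 -> H *m v = 0.
Proof.
move=> Av0; apply: self_dot_eq0.
by rewrite adjmxM -mulmxA (mulmxA (adjmx H)) -absmx_sq -mulmxA Av0 !mulmx0 mxE.
Qed.

Lemma mxtrace_mul_le_eig (s : 'M[C]_n) (l : C) : psdmx s ->
  (forall k, spectral_diag H 0 k <= l) -> \tr (s *m H) <= \tr s * l.
Proof.
move=> ps Hl; have -> : \tr s = \sum_k qform s (spectral_vec H k).
  rewrite -{1}[s]mulmx1 -(sum_spectral_vec H) mulmx_sumr raddf_sum /=.
  by apply: eq_bigr=> k _; rewrite mxtrace_mul_outer.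
rewrite {1}(hermmx_spectral_sum hH) mulmx_sumr raddf_sum mulr_suml /=.
apply: ler_sum=> k _; rewrite -scalemxAr mxtraceZ mxtrace_mul_outer mulrC.
by rewrite ler_wpM2l ?psdmx_qform.
Qed.

End TraceNorm.

(** * Block-diagonal matrices and compressions *)

Section BlockDiagonal.
Variable R : realType.
Local Notation C := R[i].
Variables n d : nat.

Definition bdiagmx (B : 'I_n -> 'M[C]_d) : 'M[C]_(n * d) :=
  \matrix_(p, q) (((mxtens_unindex p).1 == (mxtens_unindex q).1)%:R *
     B (mxtens_unindex p).1 (mxtens_unindex p).2 (mxtens_unindex q).2).

Lemma bdiagmxE (B : 'I_n -> 'M[C]_d) i a j b :
  bdiagmx B (mxtens_index (i, a)) (mxtens_index (j, b)) = (i == j)%:R * B i a b.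
Proof. by rewrite mxE !mxtens_indexK. Qed.

Lemma mulmx_bdiag (A B : 'I_n -> 'M[C]_d) :
  bdiagmx A *m bdiagmx B = bdiagmx (fun i => A i *m B i).
Proof.
apply/matrixP=> p q; case: (mxtens_indexP p)=> i a; case: (mxtens_indexP q)=> j b.
rewrite [RHS]bdiagmxE [in RHS]mxE [LHS]mxE sum_mxtens_index (bigD1 i) //=.
rewrite [X in _ + X]big1 => [|k ki]; last first.
  by apply: big1=> c _; rewrite !bdiagmxE eq_sym (negPf ki) !mul0r.
rewrite addr0 mulr_sumr; apply: eq_bigr=> c _; rewrite !bdiagmxE eqxx mul1r.
by case: (i =P j)=> [->|_]; rewrite ?mul0r ?mulr0 ?mul1r.
Qed.

Lemma adjmx_bdiag (B : 'I_n -> 'M[C]_d) :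
  adjmx (bdiagmx B) = bdiagmx (fun i => adjmx (B i)).
Proof.
apply/matrixP=> p q; case: (mxtens_indexP p)=> i a; case: (mxtens_indexP q)=> j b.
rewrite mxE !bdiagmxE rmorphM eq_sym mxE.
by case: (i =P j)=> [->|_]; rewrite ?rmorph0 ?rmorph1 ?mul0r ?mul1r.
Qed.

Lemma mxtrace_bdiag (B : 'I_n -> 'M[C]_d) : \tr (bdiagmx B) = \sum_i \tr (B i).
Proof.
rewrite /mxtrace sum_mxtens_index; apply: eq_bigr=> i _; apply: eq_bigr=> a _.
by rewrite bdiagmxE eqxx mul1r.
Qed.

Lemma scale_bdiag (c : C) (B : 'I_n -> 'M[C]_d) :
  c *: bdiagmx B = bdiagmx (fun i => c *: B i).
Proof.
apply/matrixP=> p q; case: (mxtens_indexP p)=> i a; case: (mxtens_indexP q)=> j b.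
by rewrite mxE !bdiagmxE mxE mulrCA.
Qed.

Lemma psdmx_bdiag (B : 'I_n -> 'M[C]_d) : (forall i, psdmx (B i)) -> psdmx (bdiagmx B).
Proof.
move=> pB; apply: psdmxP=> [|v].
  by rewrite adjmx_bdiag; congr bdiagmx; apply: funext=> i; rewrite psdmx_herm.
have -> : qform (bdiagmx B) v =
    \sum_i qform (B i) (\col_a v (mxtens_index (i, a)) 0).
  rewrite qformE sum_mxtens_index; apply: eq_bigr=> i _.
  rewrite [RHS]qformE; apply: eq_bigr=> a _.
  rewrite sum_mxtens_index (bigD1 i) //= [X in _ + X]big1 => [|k ki]; last first.
    by apply: big1=> c _; rewrite bdiagmxE eq_sym (negPf ki) mul0r mulr0 mul0r.
  by rewrite addr0; apply: eq_bigr=> c _; rewrite bdiagmxE eqxx mul1r !mxE.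
by apply: sumr_ge0=> i _; apply: psdmx_qform.
Qed.

Lemma trnorm_bdiag (B P : 'I_n -> 'M[C]_d) :
  (forall i, psdmx (P i) /\ P i *m P i = adjmx (B i) *m B i) ->
  Complex (trnorm (bdiagmx B)) 0 = \sum_i \tr (P i).
Proof.
move=> hP; rewrite -(@trnormE _ _ _ _ (bdiagmx P)) ?mxtrace_bdiag //.
  by apply: psdmx_bdiag=> i; case: (hP i).
rewrite mulmx_bdiag adjmx_bdiag mulmx_bdiag; congr bdiagmx.
by apply: funext=> i; case: (hP i).
Qed.

End BlockDiagonal.

Section Compression.
Variable R : realType.
Local Notation C := R[i].
Variables (m p : nat) (V : 'M[C]_(p, m)).
Hypothesis hV : V *m adjmx V = 1%:M.
Local Notation Q := (1%:M - adjmx V *m V).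

Let adjmx_compl : adjmx Q = Q.
Proof. by rewrite adjmxB adjmx1 adjmxM adjmxK. Qed.

Let compl_idem : Q *m Q = Q.
Proof.
rewrite mulmxBl mul1mx mulmxBr mulmx1 !mulmxA -(mulmxA _ V) hV mulmx1.
by rewrite subrr subr0.
Qed.

Lemma mxtrace_compress (rho : 'M[C]_m) :
  \tr rho = \tr (V *m rho *m adjmx V) + \tr (Q *m rho *m adjmx Q).
Proof.
rewrite adjmx_compl (mxtrace_mulC (Q *m rho) Q) mulmxA compl_idem.
rewrite mulmxBl mul1mx raddfB /= (mxtrace_mulC (V *m rho)) mulmxA.
by rewrite addrC subrK.
Qed.

Lemma psdmx_compress_tr_le (rho : 'M[C]_m) :
  psdmx rho -> \tr (V *m rho *m adjmx V) <= \tr rho.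
Proof.
by move=> pr; rewrite [leRHS](mxtrace_compress rho) lerDl psdmx_tr_ge0 //; apply: psdmx_conj.
Qed.

Lemma psdmx_compress_tr_eq (rho : 'M[C]_m) : psdmx rho ->
  \tr (V *m rho *m adjmx V) = \tr rho -> rho = adjmx V *m V *m rho *m (adjmx V *m V).
Proof.
move=> pr tr_eq.
have /psumr_eq0P Qdiag0 : \tr (Q *m rho *m adjmx Q) = 0.
  by apply/(addrI (\tr (V *m rho *m adjmx V))); rewrite -mxtrace_compress tr_eq addr0.
have rQ : rho *m Q = 0.
  rewrite -adjmx_compl; apply: matrix_cols_eq0=> j.
  rewrite -mulmxA; apply: psdmx_qform_eq0=> //.
  rewrite -qform_conj qform_delta; apply: Qdiag0=> // k _.
  exact/psdmx_diag_ge0/psdmx_conj.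
have r1 : rho = rho *m (adjmx V *m V).
  by apply/eqP; rewrite -subr_eq0 -{1}(mulmx1 rho) -mulmxBr rQ.
have r2 : rho = adjmx V *m V *m rho.
  by rewrite -{1}(psdmx_herm pr) {1}r1 !adjmxM adjmxK (psdmx_herm pr).
by rewrite {1}r2 {1}r1 !mulmxA.
Qed.

End Compression.

(** * Partial contractions of H_A (x) H_A' *)

Section Contractions.
Variable R : realType.
Local Notation C := R[i].
Variable d : nat.
Implicit Types (rho : 'M[C]_(d * d)) (q phi : 'cV[C]_d).

Definition anc_block rho a b : 'M[C]_d :=
  \matrix_(x, y) rho (mxtens_index (x, a)) (mxtens_index (y, b)).

Definition ptrace_anc rho : 'M[C]_d := \sum_a anc_block rho a a.

(* [bra_anc q] is [1 (x) <q| : H_A (x) H_A' -> H_A] and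
   [bra_sys phi] is [<phi| (x) 1 : H_A (x) H_A' -> H_A']. *)
Definition bra_anc q : 'M[C]_(d, d * d) :=
  \matrix_(x, p) (((mxtens_unindex p).1 == x)%:R * (q (mxtens_unindex p).2 0)^*).

Definition bra_sys phi : 'M[C]_(d, d * d) :=
  \matrix_(a, p) (((mxtens_unindex p).2 == a)%:R * (phi (mxtens_unindex p).1 0)^*).

Lemma bra_ancE q x y b :
  bra_anc q x (mxtens_index (y, b)) = (y == x)%:R * (q b 0)^*.
Proof. by rewrite mxE mxtens_indexK. Qed.

Lemma bra_sysE phi a x b :
  bra_sys phi a (mxtens_index (x, b)) = (b == a)%:R * (phi x 0)^*.
Proof. by rewrite mxE mxtens_indexK. Qed.

Lemma adjmx_bra_sysE phi a x b :
  adjmx (bra_sys phi) (mxtens_index (x, b)) a = (b == a)%:R * phi x 0.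
Proof. by rewrite mxE bra_sysE rmorphM /= rmorph_nat conjCK. Qed.

Lemma adjmx_anc_block rho a b :
  adjmx rho = rho -> adjmx (anc_block rho a b) = anc_block rho b a.
Proof. by move=> hr; apply/matrixP=> x y; rewrite !mxE -{2}hr mxE. Qed.

Lemma mxtrace_ptrace_anc rho : \tr (ptrace_anc rho) = \tr rho.
Proof.
rewrite raddf_sum /= [RHS]/mxtrace sum_mxtens_index exchange_big.
by apply: eq_bigr=> a _; apply: eq_bigr=> x _; rewrite mxE.
Qed.

Lemma compress_bra_anc q rho :
  bra_anc q *m rho *m adjmx (bra_anc q) =
  \sum_a \sum_b ((q a 0)^* * q b 0) *: anc_block rho a b.
Proof.
apply/matrixP=> x y; rewrite summxE.
under [RHS]eq_bigr => a _ do rewrite summxE.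
rewrite mulmx_adjmxE sum_mxtens_index (bigD1 x) //=.
rewrite [X in _ + X]big1 => [|z zx]; last first.
  by apply: big1=> a _; rewrite big1 // => p _; rewrite !bra_ancE (negPf zx) !mul0r.
rewrite addr0; apply: eq_bigr=> a _; rewrite sum_mxtens_index (bigD1 y) //=.
rewrite [X in _ + X]big1 => [|z zy]; last first.
  by apply: big1=> b _; rewrite !bra_ancE (negPf zy) mul0r rmorph0 mulr0.
rewrite addr0; apply: eq_bigr=> b _.
by rewrite !bra_ancE !eqxx !mul1r conjCK !mxE mulrAC.
Qed.

Lemma ptrace_anc_decomp (I : finType) (q : I -> 'cV[C]_d) rho :
  \sum_k q k *m adjmx (q k) = 1%:M ->
  ptrace_anc rho = \sum_k bra_anc (q k) *m rho *m adjmx (bra_anc (q k)).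
Proof.
move=> hq; have qq a b : \sum_k (q k a 0)^* * q k b 0 = (b == a)%:R.
  have := congr1 (fun A : 'M[C]_d => A b a) hq; rewrite summxE mxE => <-.
  by apply: eq_bigr=> k _; rewrite mxE big_ord1 mxE mulrC.
under [RHS]eq_bigr => k _ do rewrite compress_bra_anc.
rewrite exchange_big; apply: eq_bigr=> a _.
rewrite exchange_big (bigD1 a) //= [X in _ + X]big1 => [|b ba].
  by rewrite -scaler_suml qq eqxx scale1r addr0.
by rewrite -scaler_suml qq (negPf ba) scale0r.
Qed.

Lemma psdmx_ptrace_anc rho : psdmx rho -> psdmx (ptrace_anc rho).
Proof.
move=> pr; rewrite (@ptrace_anc_decomp _ (fun k => delta_mx k 0)).
  by apply: psdmx_sum=> k; apply: psdmx_conj.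
rewrite [RHS]mx1_sum_delta; apply: eq_bigr=> k _.
by rewrite adjmx_delta mul_delta_mx.
Qed.

Lemma compress_bra_sys phi rho a b :
  (bra_sys phi *m rho *m adjmx (bra_sys phi)) a b = qform (anc_block rho a b) phi.
Proof.
rewrite mulmx_adjmxE qformE sum_mxtens_index; apply: eq_bigr=> x _.
rewrite (bigD1 a) //= [X in _ + X]big1 => [|c ca]; last first.
  by apply: big1=> p _; rewrite !bra_sysE (negPf ca) !mul0r.
rewrite addr0 sum_mxtens_index; apply: eq_bigr=> y _.
rewrite (bigD1 b) //= big1 => [|e eb]; last first.
  by rewrite !bra_sysE (negPf eb) mul0r rmorph0 mulr0.
by rewrite addr0 !bra_sysE !eqxx !mul1r conjCK mxE.
Qed.

Lemma bra_sys_mulmxV phi :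
  adjmx phi *m phi = 1%:M -> bra_sys phi *m adjmx (bra_sys phi) = 1%:M.
Proof.
move=> phi1; have norm1 : \sum_x (phi x 0)^* * phi x 0 = 1.
  have := congr1 (fun A : 'M[C]_1 => A 0 0) phi1.
  rewrite mxE [RHS]mxE eqxx mulr1n => <-.
  by apply: eq_bigr=> x _; rewrite mxE.
apply/matrixP=> a b; rewrite [LHS]mxE [RHS]mxE sum_mxtens_index exchange_big.
rewrite (bigD1 a) //= [X in _ + X]big1 => [|c ca]; last first.
  by apply: big1=> x _; rewrite !bra_sysE (negPf ca) !mul0r.
transitivity ((a == b)%:R * \sum_x (phi x 0)^* * phi x 0); last by rewrite norm1 mulr1.
rewrite addr0 mulr_sumr; apply: eq_bigr=> x _.
by rewrite bra_sysE adjmx_bra_sysE eqxx mul1r mulrCA.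
Qed.

Lemma bra_sys_tens phi (tau : 'M[C]_d) :
  adjmx (bra_sys phi) *m tau *m bra_sys phi = (phi *m adjmx phi) *t tau.
Proof.
apply/matrixP=> p p'; case: (mxtens_indexP p)=> x a; case: (mxtens_indexP p')=> y b.
rewrite tensmxE -{2}(adjmxK (bra_sys phi)) mulmx_adjmxE.
rewrite (bigD1 a) //= [X in _ + X]big1 => [|c ca]; last first.
  by apply: big1=> e _; rewrite !adjmx_bra_sysE eq_sym (negPf ca) !mul0r.
rewrite addr0 (bigD1 b) //= [X in _ + X]big1 => [|e eb]; last first.
  by rewrite !adjmx_bra_sysE [b == e]eq_sym (negPf eb) mul0r rmorph0 mulr0.
rewrite addr0 !adjmx_bra_sysE !eqxx !mul1r [in RHS]mxE big_ord1 mxE.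
by rewrite mulrAC.
Qed.

End Contractions.

(** * The difference of two measurement channels *)

Section DeltaChannel.
Variable R : realType.
Local Notation C := R[i].
Variables (d n : nat) (M N : 'I_n -> 'M[C]_d).
Local Notation Dm i := (M i - N i).
Local Notation Delta := (delta_channel M N).
Local Notation Kmx := (\sum_i absmx (Dm i)).

Definition outcome_block (rho : 'M[C]_(d * d)) i : 'M[C]_d :=
  \matrix_(a, b) \tr (anc_block rho a b *m Dm i).

Lemma delta_channelE X i j : Delta X i j = (i == j)%:R * \tr (X *m Dm i).
Proof.
rewrite /delta_channel /meas_channel !mxE mulmxBr raddfB /=.
by rewrite mulrBr !mulr_natl.
Qed.

Lemma tensI_delta_channel rho : tensI Delta rho = bdiagmx (outcome_block rho).
Proof.
apply/matrixP=> p q; case: (mxtens_indexP p)=> i a; case: (mxtens_indexP q)=> j b.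
rewrite bdiagmxE /tensI !summxE.
under eq_bigr => a' _ do rewrite summxE.
under eq_bigr => a' _ do under eq_bigr => b' _ do rewrite tensmxE [delta_mx _ _ _ _]mxE.
by rewrite sum_pair_delta delta_channelE mxE.
Qed.

Lemma choi_delta_channel : choi Delta = bdiagmx (fun i => (Dm i)^T).
Proof.
apply/matrixP=> p q; case: (mxtens_indexP p)=> i x; case: (mxtens_indexP q)=> j y.
rewrite bdiagmxE /choi !summxE.
under eq_bigr => a' _ do rewrite summxE.
under eq_bigr => a' _ do under eq_bigr => b' _ do rewrite tensmxE [delta_mx _ _ _ _]mxE.
by rewrite sum_pair_delta delta_channelE mxtrace_delta_mul [_^T _ _]mxE.
Qed.

Lemma mxtrace_compress_outcome (q : 'cV[C]_d) rho i :
  \tr (bra_anc q *m rho *m adjmx (bra_anc q) *m Dm i) = qform (outcome_block rho i) q.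
Proof.
rewrite compress_bra_anc qformE mulmx_suml raddf_sum /=; apply: eq_bigr=> a _.
rewrite mulmx_suml raddf_sum /=; apply: eq_bigr=> b _.
by rewrite -scalemxAl mxtraceZ mxE mulrAC.
Qed.

Hypothesis hD : forall i, adjmx (Dm i) = Dm i.

Lemma adjmx_outcome_block rho i :
  adjmx rho = rho -> adjmx (outcome_block rho i) = outcome_block rho i.
Proof.
move=> hr; apply/matrixP=> a b; rewrite !mxE -mxtrace_adjmx adjmxM.
by rewrite adjmx_anc_block // hD mxtrace_mulC.
Qed.

Lemma trnorm_tensI_le rho : psdmx rho ->
  Complex (trnorm (tensI Delta rho)) 0 <= \tr (ptrace_anc rho *m Kmx).
Proof.
move=> pr; have hB i := adjmx_outcome_block i (psdmx_herm pr).
rewrite tensI_delta_channel.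
rewrite (@trnorm_bdiag _ _ _ _ (fun i => absmx (outcome_block rho i))); last first.
  by move=> i; split; [exact: absmx_psd | exact: absmx_sq].
rewrite mulmx_sumr raddf_sum /=; apply: ler_sum=> i _.
rewrite mxtrace_absmx (ptrace_anc_decomp rho (sum_spectral_vec (outcome_block rho i))).
rewrite mulmx_suml raddf_sum /=; apply: ler_sum=> k _.
rewrite -(qform_spectral_vec (hB i)) -mxtrace_compress_outcome.
by apply: norm_mxtrace_mul_le; [exact: hD | exact: psdmx_conj].
Qed.

Lemma psdmx_sum_absmx : psdmx Kmx.
Proof. by apply: psdmx_sum=> i; exact: absmx_psd. Qed.

Hypothesis hd : (0 < d)%N.

Lemma me_norm_delta :
  Complex (d%:R * me_norm Delta) 0 = \sum_i \tr (absmx (Dm i)).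
Proof.
have dC : (d%:R : C) != 0 by rewrite pnatr_eq0 -lt0n.
have -> : Complex (d%:R * me_norm Delta) 0 = d%:R * Complex (me_norm Delta) 0.
  by have := rmorphM (real_complex R) d%:R (me_norm Delta); rewrite rmorph_nat.
rewrite /me_norm choi_delta_channel scale_bdiag.
rewrite (@trnorm_bdiag _ _ _ _ (fun i => d%:R^-1 *: (absmx (Dm i))^T)).
  rewrite mulr_sumr; apply: eq_bigr=> i _.
  by rewrite mxtraceZ mxtrace_tr mulrA mulfV // mul1r.
move=> i; split.
  by apply: psdmxZ; [rewrite invr_ge0 ler0n | exact/psdmx_trmx/absmx_psd].
rewrite adjmxZ adjmx_trmx hD -!scalemxAl -!scalemxAr !scalerA.
by rewrite conj_Creal ?realV ?realn // -!trmx_mul absmx_sq hD.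
Qed.

Lemma diamond_nonempty :
  ([set r : R | exists rho : 'M[C]_(d * d), densitymx rho /\
     r = trnorm (tensI Delta rho)] !=set0)%classic.
Proof.
pose p0 : 'I_(d * d) := Ordinal (ltn_mul hd hd).
by eexists; exists (delta_mx p0 p0); split; [exact: densitymx_delta |].
Qed.

Lemma diamond_le_eig (l : R) :
  (forall k, spectral_diag Kmx 0 k <= Complex l 0) -> diamond_norm Delta <= l.
Proof.
move=> Kl; apply: ge_sup; first exact: diamond_nonempty.
move=> r [rho [[pr tr1] ->]].
have hK := psdmx_herm psdmx_sum_absmx.
have := le_trans (trnorm_tensI_le pr) (mxtrace_mul_le_eig hK (psdmx_ptrace_anc pr) Kl).
by rewrite mxtrace_ptrace_anc tr1 mul1r lecE /= => /andP[_].
Qed.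

Lemma mewc_rank_one : MEWC M N ->
  exists (phi : 'cV[C]_d) (gamma : 'I_n -> C),
    adjmx phi *m phi = 1%:M /\ forall i, Dm i = gamma i *: (phi *m adjmx phi).
Proof.
rewrite /MEWC => mewc.
have hK := psdmx_herm psdmx_sum_absmx.
have lam0 k : 0 <= spectral_diag Kmx 0 k := psdmx_spectral_ge0 k psdmx_sum_absmx.
have [k0 _ k0max] := @arg_maxP _ _ _ (Ordinal hd) xpredT
  (fun k => complex.Re (spectral_diag Kmx 0 k)) isT.
have lam_le k :
    spectral_diag Kmx 0 k <= Complex (complex.Re (spectral_diag Kmx 0 k0)) 0.
  by rewrite lecE /= (ger0_Im (lam0 k)) eqxx; apply: k0max.
(* MEWC says that [tr K = d ME] does not exceed the top eigenvalue of [K]. *)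
have sum_le : \sum_k spectral_diag Kmx 0 k <= spectral_diag Kmx 0 k0.
  rewrite -(mxtrace_hermmx hK) raddf_sum /= -me_norm_delta -mewc.
  by rewrite lecE /= (ger0_Im (lam0 k0)) eqxx diamond_le_eig.
have lam_eq0 j : j != k0 -> spectral_diag Kmx 0 j = 0.
  have : \sum_(j | j != k0) spectral_diag Kmx 0 j = 0.
    apply/le_anti/andP; split; last exact: sumr_ge0.
    by move: sum_le; rewrite (bigD1 k0) //= gerDl.
  by move/psumr_eq0P=> h; apply: h=> // i _; exact: lam0.
have Dv0 i j : j != k0 -> Dm i *m spectral_vec Kmx j = 0.
  move=> jk0; apply: absmx_mul_eq0; first exact: hD.
  apply: psdmx_qform_eq0; first exact: absmx_psd.
  have : qform Kmx (spectral_vec Kmx j) = 0 by rewrite qform_spectral_vec // lam_eq0.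
  rewrite qform_sum => /psumr_eq0P; apply=> // i' _.
  exact/psdmx_qform/absmx_psd.
exists (spectral_vec Kmx k0), (fun i => qform (Dm i) (spectral_vec Kmx k0)).
split=> [|i]; first exact: spectral_vec_dot.
by apply: hermmx_rank1; [exact: hD | apply: mulmx_spectral_vec=> j; exact: Dv0].
Qed.

Section RankOneDifferences.
Variables (phi : 'cV[C]_d) (gamma : 'I_n -> C).
Hypothesis phi1 : adjmx phi *m phi = 1%:M.
Hypothesis hG : forall i, Dm i = gamma i *: (phi *m adjmx phi).
Local Notation V := (bra_sys phi).
Local Notation compress rho := (V *m rho *m adjmx V).

Lemma outcome_block_rank1 rho i : outcome_block rho i = gamma i *: compress rho.
Proof.
apply/matrixP=> a b; rewrite [RHS]mxE compress_bra_sys mxE hG -scalemxAr mxtraceZ.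
by rewrite mxtrace_mul_outer.
Qed.

Lemma trnorm_tensI_rank1 rho : psdmx rho ->
  Complex (trnorm (tensI Delta rho)) 0 = (\sum_i `|gamma i|) * \tr (compress rho).
Proof.
move=> pr; have pC : psdmx (compress rho) by exact: psdmx_conj.
rewrite tensI_delta_channel.
rewrite (@trnorm_bdiag _ _ _ _ (fun i => `|gamma i| *: compress rho)).
  by rewrite mulr_suml; apply: eq_bigr=> i _; rewrite mxtraceZ.
move=> i; split; first exact: psdmxZ.
rewrite outcome_block_rank1 adjmxZ (psdmx_herm pC) -!scalemxAl -!scalemxAr !scalerA.
by rewrite -expr2 normCK mulrC.
Qed.

Lemma compress_tens (tau : 'M[C]_d) : compress ((phi *m adjmx phi) *t tau) = tau.
Proof.
rewrite -bra_sys_tens !mulmxA bra_sys_mulmxV // mul1mx.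
by rewrite -mulmxA bra_sys_mulmxV // mulmx1.
Qed.

Lemma densitymx_tens (tau : 'M[C]_d) :
  densitymx tau -> densitymx ((phi *m adjmx phi) *t tau).
Proof.
move=> [ptau tr1]; rewrite -bra_sys_tens; split.
  by rewrite -{2}(adjmxK V); apply: psdmx_conj.
by rewrite mxtrace_mulC mulmxA bra_sys_mulmxV // mul1mx.
Qed.

Lemma diamond_rank1 : Complex (diamond_norm Delta) 0 = \sum_i `|gamma i|.
Proof.
have G0 : 0 <= \sum_i `|gamma i| by apply: sumr_ge0=> i _.
move: G0; set G := \sum_i `|gamma i| => G0.
suff -> : diamond_norm Delta = complex.Re G by rewrite ge0_complexRe.
have ub : ubound [set r : R | exists rho : 'M[C]_(d * d), densitymx rho /\
    r = trnorm (tensI Delta rho)]%classic (complex.Re G).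
  move=> r [rho [[pr tr1] ->]].
  suff : Complex (trnorm (tensI Delta rho)) 0 <= Complex (complex.Re G) 0.
    by rewrite lecE /= => /andP[_].
  rewrite ge0_complexRe // trnorm_tensI_rank1 // -[leRHS]mulr1 ler_wpM2l // -tr1.
  exact/psdmx_compress_tr_le/pr/bra_sys_mulmxV.
apply/le_anti/andP; split; first exact: ge_sup diamond_nonempty ub.
pose i0 : 'I_d := Ordinal hd.
have d0 := densitymx_tens (densitymx_delta R i0).
apply: ub_le_sup; first by exists (complex.Re G).
exists ((phi *m adjmx phi) *t delta_mx i0 i0); split=> //.
have : Complex (trnorm (tensI Delta ((phi *m adjmx phi) *t delta_mx i0 i0))) 0 =
    Complex (complex.Re G) 0.
  rewrite (trnorm_tensI_rank1 (proj1 d0)) compress_tens (proj2 (densitymx_delta R i0)).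
  by rewrite mulr1 ge0_complexRe.
by case.
Qed.

Lemma absmx_rank1 i : absmx (Dm i) = `|gamma i| *: (phi *m adjmx phi).
Proof.
apply: psdmx_sqrt_uniq; [exact: absmx_psd | exact/psdmxZ/psdmx_outer |].
rewrite absmx_sq // hG adjmxZ adjmxM adjmxK -!scalemxAl -!scalemxAr !scalerA.
have -> : phi *m adjmx phi *m (phi *m adjmx phi) = phi *m adjmx phi.
  by rewrite mulmxA -(mulmxA phi) phi1 mulmx1.
by rewrite -expr2 normCK mulrC.
Qed.

Lemma me_rank1 : Complex (d%:R * me_norm Delta) 0 = \sum_i `|gamma i|.
Proof.
rewrite me_norm_delta; apply: eq_bigr=> i _.
by rewrite absmx_rank1 mxtraceZ mxtrace_mulC phi1 mxtrace1 mulr1.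
Qed.

Lemma optimal_input_rank1 : (exists i, M i != N i) ->
  forall rho : 'M[C]_(d * d), densitymx rho ->
  (trnorm (tensI Delta rho) = diamond_norm Delta <->
   exists tau : 'M[C]_d, densitymx tau /\ rho = (phi *m adjmx phi) *t tau).
Proof.
move=> [i0 Mi0] rho [pr tr1].
have G0 : \sum_i `|gamma i| != 0.
  apply/eqP=> /psumr_eq0P G0; move: Mi0; rewrite -subr_eq0 hG.
  have /eqP := G0 (fun i _ => normr_ge0 (gamma i)) i0 isT.
  by rewrite normr_eq0 => /eqP->; rewrite scale0r eqxx.
split=> [trE | [tau [dtau ->]]].
  have t1 : \tr (compress rho) = 1.
    by apply: (mulfI G0); rewrite mulr1 -trnorm_tensI_rank1 // trE diamond_rank1.
  exists (compress rho); split; first by split; [exact: psdmx_conj |].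
  rewrite -bra_sys_tens {1}(psdmx_compress_tr_eq (bra_sys_mulmxV phi1) pr) ?t1 ?tr1 //.
  by rewrite !mulmxA.
have := trnorm_tensI_rank1 (proj1 (densitymx_tens dtau)).
by rewrite compress_tens (proj2 dtau) mulr1 -diamond_rank1 => -[].
Qed.

End RankOneDifferences.

End DeltaChannel.

Theorem theorem3 (R : realType) (d n : nat) (hd : (0 < d)%N)
  (M N : 'I_n -> 'M[R[i]]_d) (hM : povm M) (hN : povm N) :
  (MEWC M N <->
     exists (phi : 'cV[R[i]]_d) (gamma : 'I_n -> R[i]),
       adjmx phi *m phi = 1%:M /\
       forall i, M i - N i = gamma i *: (phi *m adjmx phi))
  /\
  (forall (phi : 'cV[R[i]]_d) (gamma : 'I_n -> R[i]),
     adjmx phi *m phi = 1%:M ->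
     (forall i, M i - N i = gamma i *: (phi *m adjmx phi)) ->
     (exists i, M i != N i) ->
     forall rho : 'M[R[i]]_(d * d), densitymx rho ->
       (trnorm (tensI (delta_channel M N) rho) = diamond_norm (delta_channel M N)
        <-> exists tau : 'M[R[i]]_d, densitymx tau /\
              rho = (phi *m adjmx phi) *t tau)).
Proof.
have hD i : adjmx (M i - N i) = M i - N i.
  by rewrite adjmxB (psdmx_herm (proj1 hM i)) (psdmx_herm (proj1 hN i)).
split=> [|phi gamma phi1 hG]; last exact: (optimal_input_rank1 hd phi1 hG).
split=> [|[phi [gamma [phi1 hG]]]]; first exact: (mewc_rank_one hD hd).
by move: (diamond_rank1 hd phi1 hG); rewrite -(me_rank1 hD hd phi1 hG) => -[].
Qed.
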